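(* Under the mixed membership model $\mathbb{E}\mathbf{X}=\mathbf{H}=\theta\mathbf{\Pi}\mathbf{P}\mathbf{\Pi}^T$, assume there exist constants $0<c_0,c_1<1$ such that $\lambda_K(\mathbf{\Pi}^T\mathbf{\Pi})\ge c_0 n$, $\lambda_K(\mathbf{P})\ge c_0$, and $\theta\ge n^{-c_1}$. Then $$\alpha_n^2\le n\theta,\qquad d_k\sim n\theta,\quad k=1,\cdots,K.$$ Under the degree-corrected mixed membership model $\mathbf{H}=\mathbf{\Theta}\mathbf{\Pi}\mathbf{P}\mathbf{\Pi}^T\mathbf{\Theta}$, assume there exist constants $c_2,c_3\in(0,1)$ and $c_4>0$ such that $\min_{1\le k\le K}|\mathcal{N}_k|\ge c_2 n$, $\theta_{\max}\le c_4\theta_{\min}$, and $\theta_{\min}^2\ge n^{-c_3}$. Then similarly $$\alpha_n^2\le n\theta_{\max}^2,\qquad d_k\sim n\theta_{\max}^2,\quad k=1,\cdots,K.$$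
   Context: An undirected network on $n$ nodes has symmetric adjacency matrix $\mathbf{X}=\mathbf{H}+\mathbf{W}$, where the upper-triangular (including diagonal) entries of $\mathbf{X}$ are independent Bernoulli variables, $\mathbf{H}$ is the deterministic mean (probability) matrix of rank $K$ (fixed), and $\mathbf{W}=(w_{ij})$ is a symmetric noise matrix with independent entries on and above the diagonal. Let $\alpha_n=\{\max_{1\le j\le n}\sum_{i=1}^n\mathrm{var}(w_{ij})\}^{1/2}$. Write the eigendecomposition $\mathbf{H}=\mathbf{V}\mathbf{D}\mathbf{V}^T$ with $\mathbf{D}=\mathrm{diag}(d_1,\cdots,d_K)$, $|d_1|\ge\cdots\ge|d_K|>0$. Here $\mathbf{\Pi}=(\boldsymbol{\pi}_1,\cdots,\boldsymbol{\pi}_n)^T\in\mathbb{R}^{n\times K}$ has rows $\boldsymbol{\pi}_i$ that are community membership probability vectors (nonnegative entries summing to one), $\mathbf{P}=(p_{kl})\in\mathbb{R}^{K\times K}$ is nonsingular with entries in $[0,1]$, $\theta>0$ (possibly depending on $n$), $\mathbf{\Theta}=\mathrm{diag}(\theta_1,\cdots,\theta_n)$ with $\theta_i>0$ the degree heterogeneity parameters, $\theta_{\max}=\max_i\theta_i$, $\theta_{\min}=\min_i\theta_i$, and $\mathcal{N}_k=\{i:\boldsymbol{\pi}_i(k)=1\}$ is the set of pure nodes of community $k$. $\lambda_K(\cdot)$ denotes the $K$th largest eigenvalue; $a\sim b$ means same asymptotic order. *)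

From HB Require Import structures.
From mathcomp Require Import all_boot all_order all_algebra.
From mathcomp Require Import all_classical all_reals all_analysis.
Set Implicit Arguments. Unset Strict Implicit. Unset Printing Implicit Defensive.
Import Order.TTheory GRing.Theory Num.Theory.
Local Open Scope ring_scope.

(* alpha_n^2 = max_j sum_i var(w_ij); for Bernoulli entries with mean H_ij,
   var(w_ij) = H_ij (1 - H_ij). *)
Definition alpha_sq (R : realType) (n : nat) (H : 'M[R]_n) : R :=
  \big[Num.max/0]_(j < n) \sum_(i < n) H i j * (1 - H i j).

(* "lambda_K(A) >= c" for a K x K (symmetric) matrix A: its K-th largest,
   i.e. smallest, eigenvalue is at least c: every eigenvalue of A is >= c. *)
Definition lamK_ge (R : realType) (K : nat) (A : 'M[R]_K) (c : R) : Prop :=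
  forall a : R, eigenvalue A a -> c <= a.

Definition membership (R : realType) (n K : nat) (Pi : 'M[R]_(n, K)) : Prop :=
  (forall i k, 0 <= Pi i k) /\ (forall i, \sum_(k < K) Pi i k = 1).

Definition connectivity (R : realType) (K : nat) (P : 'M[R]_K) : Prop :=
  P^T = P /\ (forall k l, 0 <= P k l <= 1).

Definition prob_matrix (R : realType) (n : nat) (H : 'M[R]_n) : Prop :=
  H^T = H /\ (forall i j, 0 <= H i j <= 1).

Definition eigdecomp (R : realType) (n K : nat) (H : 'M[R]_n)
    (V : 'M[R]_(n, K)) (d : 'rV[R]_K) : Prop :=
  V^T *m V = 1%:M /\ H = V *m diag_mx d *m V^T /\
  (forall k : 'I_K, d 0 k != 0) /\
  (forall k l : 'I_K, (k <= l)%N -> `|d 0 l| <= `|d 0 k|).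

Definition theta_max (R : realType) (n : nat) (theta : 'I_n -> R) : R :=
  \big[Num.max/0]_(i < n) theta i.

Definition theta_min (R : realType) (n : nat) (theta : 'I_n -> R) : R :=
  \big[Num.min/theta_max theta]_(i < n) theta i.

Definition pure_nodes (R : realType) (n K : nat) (Pi : 'M[R]_(n, K)) (k : 'I_K)
  : {set 'I_n} := [set i | Pi i k == 1].

(* Upper bounds: the entries of H lie in [0, b] (b = theta, resp. theta_max^2),
   so every column sum of H, hence alpha_n^2 and every |d_k|, is at most n b.
   Lower bounds: write H = B M B^T (B = Pi, M = theta P, resp. B = Theta Pi,
   M = P).  A unit eigenvector v with eigenvalue d <> 0 is v = y B^T with
   y (B^T B) M = d y.  In the first model d = q_M(y B^T B), and the bounds
   lambda_K(P) >= c0, lambda_K(Pi^T Pi) >= c0 n give d >= c0^2 n theta.  In the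
   second, 1 = q_(B^T B)(y) = d q_(P^-1)(y); the pure nodes give
   B^T B >= c2 n theta_min^2 and q_(P^-1)(y) <= C |y|^2 for a constant C of P,
   so |d| >= c2 n theta_min^2 / C >= c2 n theta_max^2 / (C c4^2).
   That lambda_K(A) >= c yields q_A(x) >= c |x|^2 for symmetric A is shown by
   minimising q_A on the compact unit sphere: the minimiser is an eigenvector. *)

From HB Require Import structures.
From mathcomp Require Import all_boot all_order all_algebra.
From mathcomp Require Import all_classical all_reals all_analysis.
From mathcomp Require Import lra ring.
Import Order.TTheory GRing.Theory Num.Theory.
Import numFieldNormedType.Exports.
Local Open Scope ring_scope.
Local Open Scope classical_set_scope.
Set Implicit Arguments. Unset Strict Implicit. Unset Printing Implicit Defensive.

Section RowVectorForms.
Variable R : realType.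
Implicit Types (m : nat).

Definition vdot m (x y : 'rV[R]_m) : R := (x *m y^T) 0 0.

Definition bform m (B : 'M[R]_m) (x y : 'rV[R]_m) : R := vdot (x *m B) y.

Lemma vdotE m (x y : 'rV[R]_m) : vdot x y = \sum_i x 0 i * y 0 i.
Proof. by rewrite /vdot mxE; apply: eq_bigr => i _; rewrite mxE. Qed.

Lemma vdotC m (x y : 'rV[R]_m) : vdot x y = vdot y x.
Proof. by rewrite !vdotE; apply: eq_bigr => i _; rewrite mulrC. Qed.

Lemma vdotDl m (x y z : 'rV[R]_m) : vdot (x + y) z = vdot x z + vdot y z.
Proof. by rewrite /vdot mulmxDl mxE. Qed.

Lemma vdotZl m a (x y : 'rV[R]_m) : vdot (a *: x) y = a * vdot x y.
Proof. by rewrite /vdot -scalemxAl mxE. Qed.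

Lemma vdotDr m (x y z : 'rV[R]_m) : vdot x (y + z) = vdot x y + vdot x z.
Proof. by rewrite vdotC vdotDl !(vdotC x). Qed.

Lemma vdotZr m a (x y : 'rV[R]_m) : vdot x (a *: y) = a * vdot x y.
Proof. by rewrite vdotC vdotZl vdotC. Qed.

Lemma vdotBl m (x y z : 'rV[R]_m) : vdot (x - y) z = vdot x z - vdot y z.
Proof. by rewrite vdotDl -scaleN1r vdotZl mulN1r. Qed.

Lemma vdot0l m (y : 'rV[R]_m) : vdot 0 y = 0.
Proof. by rewrite /vdot mul0mx mxE. Qed.

Lemma vdot_mulmxl m n (A : 'M[R]_(m, n)) x y : vdot (x *m A) y = vdot x (y *m A^T).
Proof. by rewrite /vdot trmx_mul trmxK mulmxA. Qed.

Lemma vdot_delta m (x : 'rV[R]_m) j : vdot x (delta_mx 0 j) = x 0 j.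
Proof.
rewrite vdotE (bigD1 j) //= mxE !eqxx mulr1 big1 ?addr0 // => k /negPf nkj.
by rewrite mxE nkj andbF mulr0.
Qed.

Lemma sqr_coord_le_vdot m (x : 'rV[R]_m) i : x 0 i ^+ 2 <= vdot x x.
Proof.
by rewrite vdotE (bigD1 i) //= expr2 lerDl sumr_ge0 // => k _; rewrite -expr2 sqr_ge0.
Qed.

Lemma vdot_ge0 m (x : 'rV[R]_m) : 0 <= vdot x x.
Proof. by rewrite vdotE sumr_ge0 // => i _; rewrite -expr2 sqr_ge0. Qed.

Lemma vdot_gt0 m (x : 'rV[R]_m) : x != 0 -> 0 < vdot x x.
Proof.
apply: contraNT; rewrite -leNgt => x_le0; apply/eqP/rowP => i; rewrite mxE.
apply/eqP; rewrite -sqrf_eq0 eq_le sqr_ge0 andbT.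
exact: le_trans (sqr_coord_le_vdot x i) x_le0.
Qed.

Lemma vdot1_neq0 m (x : 'rV[R]_m) : vdot x x = 1 -> x != 0.
Proof. by apply: contra_eqN => /eqP ->; rewrite vdot0l eq_sym oner_eq0. Qed.

Lemma vdot_mul_diag_ge n (z delta : 'rV[R]_n) t :
  0 <= t -> (forall i, t <= delta 0 i) ->
  t ^+ 2 * vdot z z <= vdot (z *m diag_mx delta) (z *m diag_mx delta).
Proof.
move=> t_ge0 delta_ge; rewrite !vdotE mulr_sumr; apply: ler_sum => i _.
rewrite mul_mx_diag !mxE -[z 0 i * z 0 i]expr2 -[leRHS]expr2 exprMn mulrC.
by apply: ler_wpM2l; rewrite ?sqr_ge0 // lerXn2r ?nnegrE ?(le_trans t_ge0).
Qed.

Lemma bformE m (B : 'M[R]_m) x y :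
  bform B x y = \sum_i \sum_j x 0 j * B j i * y 0 i.
Proof.
rewrite /bform vdotE; apply: eq_bigr => i _.
by rewrite mxE big_distrl; apply: eq_bigr => j _.
Qed.

Lemma bform_gram m n (B : 'M[R]_(m, n)) y :
  bform (B^T *m B) y y = vdot (y *m B^T) (y *m B^T).
Proof. by rewrite /bform mulmxA vdot_mulmxl. Qed.

Lemma bform_abs_le m (B : 'M[R]_m) x :
  `|bform B x x| <= (\sum_i \sum_j `|B i j|) * vdot x x.
Proof.
rewrite bformE exchange_big /= mulr_suml; apply: le_trans (ler_norm_sum _ _ _) _.
apply: ler_sum => j _; rewrite mulr_suml; apply: le_trans (ler_norm_sum _ _ _) _.
apply: ler_sum => i _.
have xij : `|x 0 j| * `|x 0 i| <= vdot x x.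
  have := sqr_coord_le_vdot x i; have := sqr_coord_le_vdot x j.
  rewrite -[x 0 i ^+ 2](real_normK (num_real _)) -[x 0 j ^+ 2](real_normK (num_real _)).
  by have := sqr_ge0 (`|x 0 j| - `|x 0 i|); rewrite sqrrB; lra.
by rewrite !normrM mulrAC mulrC ler_wpM2l.
Qed.

Lemma continuous_bform_diag m (B : 'M[R]_m) :
  continuous (fun x : 'rV[R]_m => bform B x x).
Proof.
have -> : (fun x => bform B x x) = (fun x => \sum_i \sum_j x 0 j * B j i * x 0 i).
  by apply/funext => x; rewrite bformE.
apply: (@continuous_big _ _ +%R 0 xpredT add_continuous) => i _.
apply: (@continuous_big _ _ +%R 0 xpredT add_continuous) => j _ x.
apply: (continuousM (s := fun x : 'rV[R]_m => x 0 j * B j i)); last first.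
  exact: coord_continuous.
apply: (continuousM (s := fun x : 'rV[R]_m => x 0 j)); first exact: coord_continuous.
exact: cst_continuous.
Qed.

Lemma linear_coef_eq0_of_quadratic_ge0 (a b : R) :
  (forall t, 0 <= 2 * t * a + t ^+ 2 * b) -> a = 0.
Proof.
move=> q_ge0; have b_ge0 : 0 <= b.
  by have := q_ge0 1; have := q_ge0 (-1); rewrite sqrrN expr1n; lra.
(* t = - a / (b + 1) makes the quadratic equal to - a^2 (r + r^2), r = 1/(b+1) *)
pose r := (b + 1)^-1; have r_gt0 : 0 < r by rewrite invr_gt0; lra.
have rb : r * b = 1 - r by rewrite /r; field; lra.
have := q_ge0 (- (a * r)).
have -> : 2 * - (a * r) * a + (- (a * r)) ^+ 2 * b = - (a ^+ 2 * (r * (1 + r))).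
  rewrite (_ : (- (a * r)) ^+ 2 * b = a ^+ 2 * r * (r * b)); last by ring.
  by rewrite rb; ring.
rewrite oppr_ge0 pmulr_lle0 ?mulr_gt0 //; last lra.
by move=> a2_le0; apply/eqP; rewrite -sqrf_eq0 eq_le a2_le0 sqr_ge0.
Qed.

Lemma compact_unit_sphere m : compact [set x : 'rV[R]_m | vdot x x = 1].
Proof.
apply: bounded_closed_compact.
  exists 1; split => // r r_gt1 x /= x1.
  rewrite [leLHS]/Num.norm /= mx_normrE; apply: bigmax_le => [|[i j] _] /=.
    by rewrite ltW // (lt_trans _ r_gt1).
  rewrite [i]ord1; apply/ltW/(le_lt_trans _ r_gt1).
  have := sqr_coord_le_vdot x j; rewrite x1 -(real_normK (num_real _)) => xj.
  by rewrite -(expr_le1 (_ : 0 < 2)%N) ?normr_ge0.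
have -> : [set x : 'rV[R]_m | vdot x x = 1] = ((fun x => bform 1%:M x x) @^-1` [set 1]).
  by apply/seteqP; split => x /=; rewrite /bform mulmx1.
by apply: closed_comp => [x _|]; [exact: continuous_bform_diag | exact: closed_eq].
Qed.

Lemma bform_min_unit_sphere m (B : 'M[R]_m.+1) :
  exists2 u, vdot u u = 1 & forall y, bform B u u * vdot y y <= bform B y y.
Proof.
have sphere_nonempty : [set x : 'rV[R]_m.+1 | vdot x x = 1] !=set0.
  by exists (delta_mx 0 0); rewrite /= vdot_delta mxE !eqxx.
have [u /set_mem u1 u_min] := EVT_min_rV sphere_nonempty (@compact_unit_sphere _)
  (continuous_subspaceT (@continuous_bform_diag _ B)).
exists u => // y; have [->|y_neq0] := eqVneq y 0.
  by rewrite vdot0l mulr0 /bform mul0mx vdot0l.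
have y_gt0 := vdot_gt0 y_neq0.
pose t := (Num.sqrt (vdot y y))^-1.
have t2 : t ^+ 2 = (vdot y y)^-1 by rewrite exprVn sqr_sqrtr // ltW.
have bformZ x : bform B (t *: x) (t *: x) = t ^+ 2 * bform B x x.
  by rewrite /bform -scalemxAl vdotZl vdotZr mulrA -expr2.
have := u_min (t *: y); rewrite bformZ t2 ler_pdivlMl // mulrC => -> //.
by rewrite inE /= vdotZl vdotZr mulrA -expr2 t2 mulVf ?gt_eqF.
Qed.

Lemma psd_bform_eq0 m (C : 'M[R]_m) u : C^T = C ->
  (forall y, 0 <= bform C y y) -> bform C u u = 0 -> u *m C = 0.
Proof.
move=> C_sym C_psd Cu0; apply/rowP => j; rewrite [RHS]mxE.
pose e : 'rV[R]_m := delta_mx 0 j.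
apply: (@linear_coef_eq0_of_quadratic_ge0 _ (bform C e e)) => t.
have := C_psd (u + t *: e); rewrite /bform in Cu0 *.
rewrite mulmxDl -scalemxAl !(vdotDl, vdotDr, vdotZl, vdotZr) Cu0.
rewrite [vdot (e *m C) u]vdot_mulmxl C_sym [vdot e _]vdotC vdot_delta.
by rewrite expr2; lra.
Qed.

Lemma lamK_ge_bform m (B : 'M[R]_m) c : B^T = B -> lamK_ge B c ->
  forall x, c * vdot x x <= bform B x x.
Proof.
case: m B => [|m] B B_sym B_ge x.
  by rewrite [x]thinmx0 vdot0l mulr0 /bform mul0mx vdot0l.
have [u u1 u_min] := bform_min_unit_sphere B.
set mu := bform B u u in u_min.
have u_eig : u *m B = mu *: u.
  apply/eqP; rewrite -subr_eq0 -mul_mx_scalar -mulmxBr; apply/eqP.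
  apply: psd_bform_eq0.
  - by rewrite linearB /= tr_scalar_mx B_sym.
  - by move=> y; rewrite /bform mulmxBr mul_mx_scalar vdotBl vdotZl subr_ge0.
  - by rewrite /bform mulmxBr mul_mx_scalar vdotBl vdotZl u1 mulr1 subrr.
have c_le_mu : c <= mu by apply: B_ge; apply/eigenvalueP; exists u => //; exact: vdot1_neq0.
exact: le_trans (ler_wpM2r (vdot_ge0 x) c_le_mu) (u_min x).
Qed.

End RowVectorForms.

Section Eigenvalues.
Variable R : realType.

Lemma eigdecomp_eigenvector n K (H : 'M[R]_n) V (d : 'rV[R]_K) k :
  eigdecomp H V d ->
  row k V^T *m H = d 0 k *: row k V^T /\ vdot (row k V^T) (row k V^T) = 1.
Proof.
case=> V_orth [-> _]; split.
  rewrite -row_mul !mulmxA V_orth mul1mx mul_diag_mx.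
  by apply/rowP => j; rewrite !mxE.
rewrite /vdot tr_row trmxK.
transitivity ((V^T *m V) k k); last by rewrite V_orth mxE eqxx.
by rewrite !mxE; apply: eq_bigr => i _; rewrite !mxE.
Qed.

Lemma eigenvalue_le_col_sum n (H : 'M[R]_n) s (v : 'rV[R]_n) e :
  (forall j, \sum_i `|H i j| <= s) -> v != 0 -> v *m H = e *: v -> `|e| <= s.
Proof.
move=> H_col v_neq0 v_eig.
have [j0 vj0] : exists j, v 0 j != 0.
  by apply/existsP; apply: contraR v_neq0 => /existsPn v0; apply/eqP/rowP => j;
     rewrite mxE; apply/eqP/negbNE/v0.
have [j _ j_max] := @arg_maxP _ _ _ j0 xpredT (fun j => `|v 0 j|) isT.
have vj_gt0 : 0 < `|v 0 j| by apply: lt_le_trans (j_max j0 isT); rewrite normr_gt0.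
rewrite -(ler_pM2r vj_gt0) -normrM.
have -> : e * v 0 j = \sum_i v 0 i * H i j.
  by have := congr1 (fun w : 'rV[R]_n => w 0 j) v_eig; rewrite !mxE => <-.
apply: le_trans (ler_norm_sum _ _ _) _.
apply: le_trans (_ : _ <= \sum_i `|v 0 j| * `|H i j|) _.
  by apply: ler_sum => i _; rewrite normrM; apply: ler_wpM2r => //; exact: j_max.
by rewrite -mulr_sumr mulrC ler_wpM2r.
Qed.

Lemma eigenvalue_le_dim_mul n (H : 'M[R]_n) b (v : 'rV[R]_n) e :
  (forall i j, `|H i j| <= b) -> v != 0 -> v *m H = e *: v -> `|e| <= n%:R * b.
Proof.
move=> H_le; apply: eigenvalue_le_col_sum => j.
rewrite mulr_natl -[n in _ *+ n]card_ord -sumr_const.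
by apply: ler_sum => i _; exact: H_le.
Qed.

Lemma alpha_sq_le n (H : 'M[R]_n) b :
  0 <= b -> (forall i j, H i j <= b) -> alpha_sq H <= n%:R * b.
Proof.
move=> b_ge0 H_le; apply: bigmax_le => [|j _]; first by rewrite mulr_ge0.
rewrite mulr_natl -[n in _ *+ n]card_ord -sumr_const; apply: ler_sum => i _.
by have := H_le i j; have := sqr_ge0 (H i j); rewrite expr2; lra.
Qed.

Lemma gram_eigenvector n K (B : 'M[R]_(n, K)) (M : 'M[R]_K) v e :
  v *m (B *m M *m B^T) = e *: v -> e != 0 ->
  exists y : 'rV[R]_K, y *m B^T = v /\ y *m (B^T *m B) *m M = e *: y.
Proof.
move=> v_eig e_neq0; exists (e^-1 *: (v *m B *m M)).
have yBT : e^-1 *: (v *m B *m M) *m B^T = v.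
  by rewrite -scalemxAl -!mulmxA [B *m _]mulmxA v_eig scalerA mulVf // scale1r.
split => //; rewrite mulmxA yBT.
by rewrite scalerA mulrV ?scale1r // unitfE.
Qed.

Lemma eigenvalue_ge_of_posdef n K (B : 'M[R]_(n, K)) (M : 'M[R]_K) v e a p :
  0 <= a -> 0 <= p ->
  (forall x, a * vdot x x <= bform (B^T *m B) x x) ->
  (forall x, p * vdot x x <= bform M x x) ->
  v *m (B *m M *m B^T) = e *: v -> e != 0 -> vdot v v = 1 ->
  p * a <= e.
Proof.
move=> a_ge0 p_ge0 G_ge M_ge v_eig e_neq0 v1.
have [y [yBT y_eig]] := gram_eigenvector v_eig e_neq0.
set w := y *m (B^T *m B) in y_eig.
have wy : vdot w y = 1 by rewrite -v1 -yBT -bform_gram.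
have a_le_w : a <= vdot w w.
  have ay : a * (a * vdot y y) <= a.
    by rewrite -[leRHS]mulr1 -wy; apply: ler_wpM2l => //; exact: G_ge.
  (* 0 <= |w - a y|^2 = |w|^2 - 2 a + a^2 |y|^2 <= |w|^2 - a *)
  have := vdot_ge0 (w + (- a) *: y).
  rewrite !(vdotDl, vdotDr, vdotZl, vdotZr) [vdot y w]vdotC wy; lra.
have -> : e = bform M w w by rewrite /bform y_eig vdotZl vdotC wy mulr1.
exact: le_trans (ler_wpM2l p_ge0 a_le_w) (M_ge w).
Qed.

Lemma eigenvalue_ge_of_invertible n K (B : 'M[R]_(n, K)) (M : 'M[R]_K) v e g C :
  M \in unitmx ->
  (forall x, g * vdot x x <= bform (B^T *m B) x x) ->
  (forall x, `|bform (invmx M) x x| <= C * vdot x x) ->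
  v *m (B *m M *m B^T) = e *: v -> e != 0 -> vdot v v = 1 ->
  g <= C * `|e|.
Proof.
move=> M_unit G_ge Minv_le v_eig e_neq0 v1.
have [y [yBT y_eig]] := gram_eigenvector v_eig e_neq0.
have yG : y *m (B^T *m B) = e *: (y *m invmx M).
  by rewrite -(mulmxK M_unit (y *m _)) y_eig scalemxAl.
have y_gt0 : 0 < vdot y y.
  by apply/vdot_gt0; apply: contraNneq (vdot1_neq0 v1) => y0; rewrite -yBT y0 mul0mx.
have one_eq : 1 = e * bform (invmx M) y y by rewrite -v1 -yBT -bform_gram /bform yG vdotZl.
rewrite -(ler_pM2r y_gt0) -mulrA; apply: le_trans (G_ge y) _.
rewrite bform_gram yBT v1 {1}one_eq; apply: le_trans (ler_norm _) _.
by rewrite normrM mulrCA; apply: ler_wpM2l => //; exact: Minv_le.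
Qed.

Lemma eigdecomp_bounds n K (H : 'M[R]_n) V (d : 'rV[R]_K) b L :
  0 <= b -> (forall i j, 0 <= H i j <= b) -> eigdecomp H V d ->
  (forall v e, v *m H = e *: v -> e != 0 -> vdot v v = 1 -> L <= `|e|) ->
  alpha_sq H <= n%:R * b /\ (forall k, L <= `|d 0 k| <= n%:R * b).
Proof.
move=> b_ge0 H_bnd eig H_lower; split.
  by apply: alpha_sq_le => // i j; case/andP: (H_bnd i j).
move=> k; have [v_eig v1] := eigdecomp_eigenvector k eig.
have [_ [_ [d_neq0 _]]] := eig.
rewrite (H_lower _ _ v_eig) //=; apply: eigenvalue_le_dim_mul (vdot1_neq0 v1) v_eig.
by move=> i j; case/andP: (H_bnd i j) => H_ge0 H_le; rewrite ger0_norm.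
Qed.

End Eigenvalues.

Section Membership.
Variables (R : realType) (n K : nat) (Pi : 'M[R]_(n, K)).
Hypothesis Pi_mem : membership Pi.

Lemma pure_nodes_other i k l : i \in pure_nodes Pi k -> l != k -> Pi i l = 0.
Proof.
case: Pi_mem => Pi_ge0 Pi_sum1; rewrite inE => /eqP Pik1 lk.
have : \sum_(l < K | l != k) Pi i l == 0.
  by apply/eqP; move: (Pi_sum1 i); rewrite (bigD1 k) //= Pik1; lra.
rewrite psumr_eq0 => [/allP/(_ l (mem_index_enum _))|l' _]; last exact: Pi_ge0.
by rewrite lk => /eqP.
Qed.

Lemma pure_nodes_uniq i k l :
  i \in pure_nodes Pi k -> i \in pure_nodes Pi l -> k = l.
Proof.
move=> ik il; apply/eqP; apply: contraT => kl.
have : Pi i l = 0 by apply: (pure_nodes_other ik); rewrite eq_sym.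
by move: il; rewrite inE => /eqP -> /eqP; rewrite oner_eq0.
Qed.

Lemma mul_tr_pure_nodes (x : 'rV[R]_K) i k :
  i \in pure_nodes Pi k -> (x *m Pi^T) 0 i = x 0 k.
Proof.
move=> ik; rewrite mxE (bigD1 k) //= mxE big1 => [|l lk].
  by move: ik; rewrite inE => /eqP ->; rewrite mulr1 addr0.
by rewrite mxE (pure_nodes_other ik lk) mulr0.
Qed.

Lemma gram_ge_pure_nodes c :
  (forall k, c <= #|pure_nodes Pi k|%:R) ->
  forall x, c * vdot x x <= bform (Pi^T *m Pi) x x.
Proof.
move=> N_ge x; rewrite bform_gram [vdot (_ *m _) _]vdotE vdotE mulr_sumr.
set z := x *m Pi^T.
apply: le_trans (_ : _ <= \sum_k \sum_(i in pure_nodes Pi k) z 0 i * z 0 i) _.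
  apply: ler_sum => k _; rewrite (eq_bigr (fun=> x 0 k * x 0 k)) => [|i ik].
    by rewrite sumr_const -mulr_natl ler_wpM2r // -expr2 sqr_ge0.
  by rewrite /z (mul_tr_pure_nodes _ ik).
rewrite (exchange_big_dep xpredT) //=; apply: ler_sum => i _.
have [k ik|no_k] := pickP (fun k => i \in pure_nodes Pi k).
  by rewrite (big_pred1 k) // => l /=; apply/idP/eqP => [/(pure_nodes_uniq ik)|->].
by rewrite big_pred0 ?no_k // -expr2 sqr_ge0.
Qed.

Lemma entry_membership_connectivity (P : 'M[R]_K) i j :
  connectivity P -> 0 <= (Pi *m P *m Pi^T) i j <= 1.
Proof.
case: Pi_mem => Pi_ge0 Pi_sum1 [_ P01]; rewrite !mxE; apply/andP; split.
  apply: sumr_ge0 => l _; rewrite !mxE; apply: mulr_ge0 => //.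
  by apply: sumr_ge0 => k _; apply: mulr_ge0 => //; case/andP: (P01 k l).
apply: le_trans (_ : _ <= \sum_(l < K) (\sum_(k < K) Pi i k) * Pi j l) _.
  apply: ler_sum => l _; rewrite !mxE; apply: ler_wpM2r => //.
  by apply: ler_sum => k _; apply: ler_piMr => //; case/andP: (P01 k l).
by rewrite Pi_sum1 (eq_bigr (fun l => Pi j l)) ?Pi_sum1 // => l _; exact: mul1r.
Qed.

End Membership.

Section Models.
Variable R : realType.

Lemma theta_min_le n (theta : 'I_n -> R) i : theta_min theta <= theta i.
Proof. exact: bigmin_le. Qed.

Lemma theta_max_ge n (theta : 'I_n -> R) i : theta i <= theta_max theta.
Proof. exact: le_bigmax. Qed.

Lemma theta_max_ge0 n (theta : 'I_n -> R) : 0 <= theta_max theta.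
Proof. exact: bigmax_ge_id. Qed.

Lemma diag_conj_entry_bound n (A : 'M[R]_n) (theta : 'I_n -> R) b i j :
  (forall i, 0 <= theta i <= b) -> 0 <= A i j <= 1 ->
  0 <= (diag_mx (\row_i theta i) *m A *m diag_mx (\row_i theta i)) i j <= b ^+ 2.
Proof.
move=> theta_bnd /andP[A_ge0 A_le1]; rewrite mul_mx_diag mul_diag_mx !mxE.
have /andP[ti_ge0 ti_le] := theta_bnd i; have /andP[tj_ge0 tj_le] := theta_bnd j.
rewrite !mulr_ge0 //= expr2; apply: ler_pM; rewrite ?mulr_ge0 //.
by rewrite -[b]mulr1; apply: ler_pM.
Qed.

Lemma gram_ge_degree_pure_nodes n K (Pi : 'M[R]_(n, K)) (theta : 'I_n -> R) c t :
  membership Pi -> 0 <= t -> (forall i, t <= theta i) ->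
  (forall k, c <= #|pure_nodes Pi k|%:R) ->
  let B := diag_mx (\row_i theta i) *m Pi in
  forall x, c * t ^+ 2 * vdot x x <= bform (B^T *m B) x x.
Proof.
move=> Pi_mem t_ge0 theta_ge N_ge B x.
rewrite bform_gram /B trmx_mul tr_diag_mx mulmxA -mulrA mulrCA.
apply: le_trans (vdot_mul_diag_ge _ t_ge0 _); last by move=> i; rewrite mxE.
by apply: ler_wpM2l; rewrite ?sqr_ge0 // -bform_gram; exact: gram_ge_pure_nodes.
Qed.

Lemma mixed_membership_bounds n K (Pi : 'M[R]_(n, K)) P
    (theta : R) (V : 'M[R]_(n, K)) (d : 'rV[R]_K) (c0 : R) :
  membership Pi -> connectivity P -> 0 < theta -> 0 <= c0 ->
  let H := theta *: (Pi *m P *m Pi^T) in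
  lamK_ge (Pi^T *m Pi) (c0 * n%:R) -> lamK_ge P c0 -> eigdecomp H V d ->
  alpha_sq H <= n%:R * theta /\
  (forall k, c0 * c0 * (n%:R * theta) <= `|d 0 k| <= n%:R * theta).
Proof.
move=> Pi_mem [P_sym P01] theta_gt0 c0_ge0 H G_ge P_ge eig.
have H_bnd i j : 0 <= H i j <= theta.
  have /andP[A_ge0 A_le1] := entry_membership_connectivity Pi_mem i j (conj P_sym P01).
  by rewrite mxE mulr_ge0 ?ler_piMr // ltW.
apply: eigdecomp_bounds (ltW theta_gt0) H_bnd eig _ => v e v_eig e_neq0 v1.
have -> : c0 * c0 * (n%:R * theta) = (theta * c0) * (c0 * n%:R) by ring.
apply: le_trans (ler_norm e).
apply: (eigenvalue_ge_of_posdef (B := Pi) (M := theta *: P)) e_neq0 v1.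
- exact: mulr_ge0 c0_ge0 (ler0n _ _).
- exact: mulr_ge0 (ltW theta_gt0) c0_ge0.
- by apply: (lamK_ge_bform _ G_ge); rewrite trmx_mul trmxK.
- move=> x; rewrite /bform -scalemxAr vdotZl -mulrA.
  by apply: ler_wpM2l; [exact: ltW | exact: lamK_ge_bform].
- by rewrite -scalemxAr -scalemxAl.
Qed.

Lemma degree_corrected_bounds n K (Pi : 'M[R]_(n, K)) P (theta : 'I_n -> R)
    (V : 'M[R]_(n, K)) (d : 'rV[R]_K) (c2 c4 C : R) :
  0 <= c2 -> 0 < c4 -> 0 < C -> membership Pi -> connectivity P -> P \in unitmx ->
  (forall x, `|bform (invmx P) x x| <= C * vdot x x) -> (forall i, 0 < theta i) ->
  let Theta := diag_mx (\row_i theta i) in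
  let H := Theta *m Pi *m P *m Pi^T *m Theta in
  (forall k, c2 * n%:R <= #|pure_nodes Pi k|%:R) ->
  theta_max theta <= c4 * theta_min theta -> eigdecomp H V d ->
  alpha_sq H <= n%:R * theta_max theta ^+ 2 /\
  (forall k, c2 / (C * c4 ^+ 2) * (n%:R * theta_max theta ^+ 2) <= `|d 0 k|
             <= n%:R * theta_max theta ^+ 2).
Proof.
move=> c2_ge0 c4_gt0 C_gt0 Pi_mem P_conn P_unit C_bnd theta_gt0 Theta H N_ge tM_le eig.
set tM := theta_max theta in tM_le *; set tm := theta_min theta in tM_le.
have tM_ge0 : 0 <= tM := theta_max_ge0 theta.
have tm_ge0 : 0 <= tm by rewrite -(pmulr_rge0 _ c4_gt0) (le_trans tM_ge0).
have H_bnd i j : 0 <= H i j <= tM ^+ 2.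
  have -> : H = Theta *m (Pi *m P *m Pi^T) *m Theta by rewrite /H !mulmxA.
  apply: diag_conj_entry_bound.
    by move=> l; rewrite ltW ?theta_max_ge.
  exact: entry_membership_connectivity.
apply: eigdecomp_bounds (sqr_ge0 tM) H_bnd eig _ => v e v_eig e_neq0 v1.
rewrite (_ : H = Theta *m Pi *m P *m (Theta *m Pi)^T) in v_eig; last first.
  by rewrite /H trmx_mul tr_diag_mx !mulmxA.
have := eigenvalue_ge_of_invertible P_unit
  (gram_ge_degree_pure_nodes Pi_mem tm_ge0 (theta_min_le theta) N_ge) C_bnd v_eig e_neq0 v1.
move=> g_le; rewrite mulrAC ler_pdivrMr ?mulr_gt0 ?exprn_gt0 //.
have tM2_le : tM ^+ 2 <= c4 ^+ 2 * tm ^+ 2.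
  by rewrite -exprMn lerXn2r ?nnegrE // mulr_ge0 // ltW.
have := ler_wpM2l (mulr_ge0 c2_ge0 (ler0n _ n)) tM2_le.
have := ler_wpM2l (sqr_ge0 c4) g_le.
lra.
Qed.

End Models.

Theorem lemma8 (R : realType) :
  (* Mixed membership model H = theta Pi P Pi^T *)
  (forall (K : nat) (c0 c1 : R), (0 < K)%N ->
    0 < c0 < 1 -> 0 < c1 < 1 ->
    exists Clo Chi : R, 0 < Clo /\ 0 < Chi /\
    exists N : nat, forall (n : nat), (N <= n)%N ->
    forall (Pi : 'M[R]_(n, K)) (P : 'M[R]_K) (theta : R)
           (V : 'M[R]_(n, K)) (d : 'rV[R]_K),
      membership Pi -> connectivity P -> \det P != 0 -> 0 < theta ->
      let H := theta *: (Pi *m P *m Pi^T) in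
      prob_matrix H ->
      lamK_ge (Pi^T *m Pi) (c0 * n%:R) ->
      lamK_ge P c0 ->
      (n%:R) `^ (- c1) <= theta ->
      eigdecomp H V d ->
      alpha_sq H <= n%:R * theta /\
      (forall k : 'I_K, Clo * (n%:R * theta) <= `|d 0 k| <= Chi * (n%:R * theta)))
  /\
  (* Degree-corrected mixed membership model H = Theta Pi P Pi^T Theta *)
  (forall (K : nat) (P : 'M[R]_K) (c2 c3 c4 : R), (0 < K)%N ->
    connectivity P -> \det P != 0 ->
    0 < c2 < 1 -> 0 < c3 < 1 -> 0 < c4 ->
    exists Clo Chi : R, 0 < Clo /\ 0 < Chi /\
    exists N : nat, forall (n : nat), (N <= n)%N ->
    forall (Pi : 'M[R]_(n, K)) (theta : 'I_n -> R)
           (V : 'M[R]_(n, K)) (d : 'rV[R]_K),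
      membership Pi -> (forall i, 0 < theta i) ->
      let Theta := diag_mx (\row_i theta i) in
      let H := Theta *m Pi *m P *m Pi^T *m Theta in
      prob_matrix H ->
      (forall k : 'I_K, c2 * n%:R <= (#|pure_nodes Pi k|)%:R) ->
      theta_max theta <= c4 * theta_min theta ->
      (n%:R) `^ (- c3) <= theta_min theta ^+ 2 ->
      eigdecomp H V d ->
      alpha_sq H <= n%:R * theta_max theta ^+ 2 /\
      (forall k : 'I_K, Clo * (n%:R * theta_max theta ^+ 2) <= `|d 0 k|
                        <= Chi * (n%:R * theta_max theta ^+ 2))).

Proof.
split.
  move=> K c0 c1 _ /andP[c0_gt0 _] _.
  exists (c0 * c0), 1; split; first exact: mulr_gt0.
  split; first exact: ltr01.
  exists 0%N => n _ Pi P theta V d Pi_mem P_conn _ theta_gt0 H _ G_ge P_ge _ eig.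
  by rewrite mul1r; exact: mixed_membership_bounds (ltW c0_gt0) G_ge P_ge eig.
move=> K P c2 c3 c4 _ P_conn P_det /andP[c2_gt0 _] _ c4_gt0.
(* the [+ 1] only makes [0 < C] immediate *)
pose C := \sum_i \sum_j `|invmx P i j| + 1.
have C_gt0 : 0 < C by rewrite ltr_wpDl ?sumr_ge0 // => i _; rewrite sumr_ge0.
have C_bnd x : `|bform (invmx P) x x| <= C * vdot x x.
  apply: le_trans (bform_abs_le _ x) _; apply: ler_wpM2r; first exact: vdot_ge0.
  by rewrite lerDl.
exists (c2 / (C * c4 ^+ 2)), 1; split; first by rewrite divr_gt0 ?mulr_gt0 ?exprn_gt0.
split; first exact: ltr01.
exists 0%N => n _ Pi theta V d Pi_mem theta_gt0 Theta H _ N_ge tM_le _ eig.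
have P_unit : P \in unitmx by rewrite unitmxE unitfE.
rewrite mul1r; exact: degree_corrected_bounds (ltW c2_gt0) c4_gt0 C_gt0 Pi_mem P_conn
  P_unit C_bnd theta_gt0 N_ge tM_le eig.
Qed.
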